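(* Let $\mathcal{A} = (V, V_0, V_1, E, v_I)$ be an arena and $w \colon E \to \mathbb{Z}$ a weight function. Player~$0$ wins $(\mathcal{A}, \mathsf{AvgEnergy_L}(w, t))$ for some $t \in \mathbb{N}$ if, and only if, Player~$0$ wins $(\mathcal{A}, \mathsf{Energy_{LU}}(w, cap))$ for some $cap \in \mathbb{N}$.
   Context: An arena $\mathcal{A} = (V, V_0, V_1, E, v_I)$ consists of a finite directed graph $(V,E)$ in which every vertex has at least one outgoing edge, a partition $V = V_0 \uplus V_1$ (vertices of Player~$0$ and Player~$1$), and an initial vertex $v_I$. A play is an infinite path $v_0 v_1 v_2 \cdots$ with $v_0 = v_I$. A strategy for Player~$i$ is a map $\sigma \colon V^* V_i \to V$ with $(v, \sigma(xv)) \in E$ for all $xv \in V^*V_i$; a play is consistent with $\sigma$ if $v_{n+1} = \sigma(v_0\cdots v_n)$ whenever $v_n \in V_i$. Given an objective $\mathrm{Win} \subseteq V^\omega$, Player~$0$ wins $(\mathcal{A}, \mathrm{Win})$ if she has a strategy all of whose consistent plays lie in $\mathrm{Win}$. The energy level of a finite path is $\mathrm{EL}(v_0 \cdots v_n) = \sum_{i=0}^{n-1} w(v_i, v_{i+1})$. Objectives: $\mathsf{Energy_L}(w) = \{ v_0 v_1 \cdots \mid \forall n.\ 0 \le \mathrm{EL}(v_0\cdots v_n)\}$; $\mathsf{Energy_{LU}}(w,cap) = \{ v_0 v_1 \cdots \mid \forall n.\ 0 \le \mathrm{EL}(v_0\cdots v_n) \le cap\}$; $\mathsf{AE}(w,t)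 = \{ v_0 v_1 \cdots \mid \limsup_{n\to\infty} \frac{1}{n}\sum_{i=0}^{n-1} \mathrm{EL}(v_0\cdots v_i) \le t\}$; $\mathsf{AvgEnergy_L}(w,t) = \mathsf{Energy_L}(w) \cap \mathsf{AE}(w,t)$. *)

From mathcomp Require Import all_boot all_order all_algebra.
Set Implicit Arguments. Unset Strict Implicit. Unset Printing Implicit Defensive.
Import Order.TTheory GRing.Theory Num.Theory.
Local Open Scope ring_scope.

(* An arena (V, V0, V1, E, vI): V finite, V0 = vertices of Player 0 (V1 is its
   complement), E the edge relation, every vertex has a successor. *)
Record arena := Arena {
  vert : finType;
  V0 : {pred vert};
  edge : rel vert;
  vinit : vert;
  edge_total : forall v, exists u, edge v u
}.

Arguments V0 : clear implicits.
Arguments edge : clear implicits.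
Arguments vinit : clear implicits.
Section Games.
Variable A : arena.
Let V := vert A.

(* Player i is represented by a boolean: i = false is Player 0. *)
Definition owned_by (i : bool) (v : V) : bool :=
  if i then v \notin V0 A else v \in V0 A.

(* A strategy for Player i: a map from histories x v (x : V^*, v \in V_i) to
   a successor of v.  We write it curried as sigma x v. *)
Definition strategy (i : bool) (sigma : seq V -> V -> V) : Prop :=
  forall (x : seq V) (v : V), owned_by i v -> edge A v (sigma x v).

Definition is_play (p : nat -> V) : Prop :=
  p 0%N = vinit A /\ forall n, edge A (p n) (p n.+1).

Definition prefix (p : nat -> V) (n : nat) : seq V := [seq p k | k <- iota 0 n].

Definition consistent (i : bool) (sigma : seq V -> V -> V) (p : nat -> V) : Prop :=
  forall n, owned_by i (p n) -> p n.+1 = sigma (prefix p n) (p n).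

Definition wins0 (Win : (nat -> V) -> Prop) : Prop :=
  exists sigma, strategy false sigma /\
    forall p, is_play p -> consistent false sigma p -> Win p.

Definition EL (w : V -> V -> int) (p : nat -> V) (n : nat) : int :=
  \sum_(i < n) w (p i) (p i.+1).

Definition EnergyL (w : V -> V -> int) (p : nat -> V) : Prop :=
  forall n, 0 <= EL w p n.

Definition EnergyLU (w : V -> V -> int) (cap : nat) (p : nat -> V) : Prop :=
  forall n, 0 <= EL w p n <= cap%:Z.

Definition avgEL (w : V -> V -> int) (p : nat -> V) (n : nat) : rat :=
  ((\sum_(i < n) EL w p i)%:~R) / (n%:R).

(* limsup_{n -> oo} a_n <= t, unfolded: for every eps > 0, eventually
   a_n <= t + eps. *)
Definition limsup_le (a : nat -> rat) (t : rat) : Prop :=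
  forall eps : rat, 0 < eps -> exists N : nat, forall n, (N <= n)%N -> a n <= t + eps.

Definition AE (w : V -> V -> int) (t : nat) (p : nat -> V) : Prop :=
  limsup_le (avgEL w p) t%:R.

Definition AvgEnergyL (w : V -> V -> int) (t : nat) (p : nat -> V) : Prop :=
  EnergyL w p /\ AE w t p.

End Games.

(* If some cap C makes (vinit, 0) winning in the safety game on V x [0, C], the
   safety strategy wins Energy_LU(C), and such plays also satisfy AvgEnergy_L(C).
   Otherwise (vinit, 0) is unsafe for every cap.  From an unsafe state Player 1
   can force, within |V| L steps (an attractor on the finite set V x [0, L)),
   either negative energy or an unsafe state with energy at least L: outside the
   attractor Player 0 could stay in [0, L) forever or escape to safe states.
   Against a strategy winning AvgEnergy_L(t), Player 1 keeps raising L; since the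
   energy drops by at most W per step, a peak 2 W Q makes the sum of the energy
   levels exceed Q^2, and for Q large compared with the elapsed time this
   contradicts the bound t on the averages. *)

From Pilot Require Import Defs.
From mathcomp Require Import all_boot all_order all_algebra zify.
From Stdlib Require Import Classical ClassicalEpsilon.
Set Implicit Arguments. Unset Strict Implicit. Unset Printing Implicit Defensive.
Import Order.TTheory GRing.Theory Num.Theory.

Definition asbool (P : Prop) : bool :=
  if excluded_middle_informative P then true else false.

Lemma asboolP (P : Prop) : reflect P (asbool P).
Proof. by rewrite /asbool; case: excluded_middle_informative => h; constructor. Qed.

Lemma chain_stabilizes (T : finType) (B : nat -> {set T}) :
  (forall k, B k \subset B k.+1) -> exists2 k, (k <= #|T|)%N & B k.+1 = B k.
Proof.
move=> incB; have [/existsP [k /eqP eqB] | /existsP noeq] :=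
  boolP [exists k : 'I_#|T|.+1, B k.+1 == B k].
  by exists k => //; rewrite -ltnS.
have growB k : (k <= #|T|.+1)%N -> (k <= #|B k|)%N.
  elim: k => [|k IH] // ltkT; apply: leq_ltn_trans (IH (ltnW ltkT)) _.
  apply: proper_card; rewrite properEneq incB andbT eq_sym.
  by apply/negP => eqB; apply: noeq; exists (Ordinal ltkT).
by have := leq_trans (growB _ (leqnn _)) (max_card _); rewrite ltnn.
Qed.

Lemma exists_uniform_bound (I : finType) (P : I -> nat -> Prop) :
  (forall i C C', (C <= C')%N -> P i C -> P i C') ->
  (forall i, exists C, P i C) -> exists C, forall i, P i C.
Proof.
move=> monoP exP; pose C i := proj1_sig (constructive_indefinite_description _ (exP i)).
exists (\max_i C i) => i; apply: (monoP i (C i)); first exact: leq_bigmax.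
exact: proj2_sig (constructive_indefinite_description _ (exP i)).
Qed.

Local Open Scope ring_scope.

Lemma sum_ge_of_peak (f : nat -> int) (T Q W : nat) :
  f 0%N = 0 -> (forall i, 0 <= f i) -> (forall i, f i.+1 <= f i + W%:Z) -> (0 < W)%N ->
  (2 * W * Q)%N%:Z <= f T -> (Q * Q.+1)%N%:Z <= \sum_(i < T.+1) f i.
Proof.
move=> f0 f_ge0 f_step W_gt0 f_peak.
have back j : (j <= T)%N -> f T - (j * W)%N%:Z <= f (T - j)%N.
  elim: j => [|j IH] lt_jT; first by rewrite subn0 mul0n subr0.
  have := f_step (T - j.+1)%N; rewrite subnSK // mulSn.
  by have := IH (ltnW lt_jT); lia.
have le_QT : (Q <= T)%N.
  have := back T (leqnn T); rewrite subnn f0; nia.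
have ge_Q j : (j <= Q)%N -> Q%:Z <= f (T - j)%N.
  move=> le_jQ; have := back j (leq_trans le_jQ le_QT).
  have : (j * W <= Q * W)%N by rewrite leq_mul2r le_jQ orbT.
  have : (Q <= W * Q)%N by rewrite leq_pmull.
  lia.
rewrite -(big_mkord xpredT) (big_cat_nat (leq0n (T - Q))) ?leqW ?leq_subr //=.
apply: ler_wpDl; first by apply: sumr_ge0 => i _.
apply: le_trans (ler_sum_nat (F := fun=> Q%:Z) _).
  by rewrite sumr_const_nat subSn ?leq_subr // subKn // -mulr_natr natz PoszM.
move=> i /andP [le_i lt_i]; have := ge_Q (T - i)%N; rewrite subKn //.
by apply; lia.
Qed.

Section EnergyGames.
Variable A : arena.
Variable w : vert A -> vert A -> int.
Local Notation V := (vert A).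

Definition ELseq (h : seq V) : int :=
  \sum_(i < (size h).-1) w (nth (vinit A) h i) (nth (vinit A) h i.+1).

Lemma size_prefix (p : nat -> V) n : size (Defs.prefix p n) = n.
Proof. by rewrite /Defs.prefix size_map size_iota. Qed.

Lemma prefixS (p : nat -> V) n : Defs.prefix p n.+1 = rcons (Defs.prefix p n) (p n).
Proof. by rewrite /Defs.prefix -addn1 iotaD map_cat cats1. Qed.

Lemma nth_prefix (p : nat -> V) n i : (i < n)%N -> nth (vinit A) (Defs.prefix p n) i = p i.
Proof. by move=> ltin; rewrite /Defs.prefix (nth_map 0%N) ?size_iota // nth_iota. Qed.

Lemma ELseq_prefix (p : nat -> V) n : ELseq (Defs.prefix p n.+1) = EL w p n.
Proof.
rewrite /ELseq size_prefix; apply: eq_bigr => i _.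
by rewrite !nth_prefix // ltnS // ltnW.
Qed.

Lemma EL0 (p : nat -> V) : EL w p 0 = 0.
Proof. by rewrite /EL big_ord0. Qed.

Lemma ELS (p : nat -> V) n : EL w p n.+1 = EL w p n + w (p n) (p n.+1).
Proof. by rewrite /EL big_ord_recr. Qed.

Lemma EnergyLU_AvgEnergyL (cap : nat) p : EnergyLU w cap p -> AvgEnergyL w cap p.
Proof.
move=> boundedp; split=> [n|eps eps_gt0]; first by case/andP: (boundedp n).
exists 0%N => -[|n] _; first by rewrite /avgEL invr0 mulr0 addr_ge0 // ltW.
rewrite /avgEL ler_pdivrMr ?ltr0n //.
apply: (@le_trans _ _ (cap%:R * n.+1%:R)); last by rewrite ler_pM2r ?ltr0n // lerDl ltW.
have : \sum_(i < n.+1) EL w p i <= \sum_(i < n.+1) cap%:Z.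
  by apply: ler_sum => i _; case/andP: (boundedp i).
rewrite sumr_const card_ord -(ler_int rat) => /le_trans; apply.
by rewrite rmorphMn /= mulr_natr.
Qed.

Definition in_range (C : nat) (e : int) := (0 <= e <= C%:Z).

Definition cpre0 (C : nat) (X : V -> int -> Prop) (v : V) (e : int) : Prop :=
  in_range C e /\
  (if v \in V0 A then exists2 u, edge A v u & X u (e + w v u)
   else forall u, edge A v u -> X u (e + w v u)).

Definition safe (C : nat) (v : V) (e : int) : Prop :=
  exists2 X : V -> int -> Prop, (forall v e, X v e -> cpre0 C X v e) & X v e.

Lemma cpre0_mono C (X Y : V -> int -> Prop) v e :
  (forall v e, X v e -> Y v e) -> cpre0 C X v e -> cpre0 C Y v e.
Proof.
move=> subXY [rng_e step]; split=> //; case: (v \in V0 A) step => [[u vu Xu]|allX].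
  by exists u; last exact: subXY.
by move=> u vu; apply/subXY/allX.
Qed.

Lemma safe_cpre0 C v e : safe C v e -> cpre0 C (safe C) v e.
Proof.
case=> X postX Xv; apply: (cpre0_mono (X := X)); last exact: postX.
by move=> u f Xu; exists X.
Qed.

Lemma safe_le C C' v e : (C <= C')%N -> safe C v e -> safe C' v e.
Proof.
move=> leCC' [X postX Xv]; exists X => // u f /postX [/andP [ge0 leC] step].
by split=> //; rewrite /in_range ge0 (le_trans leC) ?lez_nat.
Qed.

Definition choose_edge (v : V) (Q : V -> Prop) : V :=
  epsilon (inhabits v) (fun u => edge A v u /\ ((exists2 u', edge A v u' & Q u') -> Q u)).

Lemma choose_edgeP v Q :
  edge A v (choose_edge v Q) /\ ((exists2 u, edge A v u & Q u) -> Q (choose_edge v Q)).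
Proof.
apply: (epsilon_spec (inhabits v) (fun u => edge A v u /\ ((exists2 u', edge A v u' & Q u') -> Q u))).
have [u vu] := edge_total v.
case: (excluded_middle_informative (exists2 u, edge A v u & Q u)) => [[u' vu' Qu']|noQ].
  by exists u'.
by exists u; split=> // exQ; case: noQ.
Qed.

Definition safe_strategy (C : nat) (x : seq V) (v : V) : V :=
  choose_edge v (fun u => safe C u (ELseq (rcons x v) + w v u)).

Lemma safe_wins0 C : safe C (vinit A) 0 -> wins0 (EnergyLU w C).
Proof.
move=> safe0; exists (safe_strategy C); split.
  by move=> x v _; case: (choose_edgeP v (fun u => safe C u (ELseq (rcons x v) + w v u))).
move=> p [p0 pE] consp.
suff safep n : safe C (p n) (EL w p n) by move=> n; case: (safe_cpre0 (safep n)).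
elim: n => [|n IH]; first by rewrite EL0 p0.
have [_] := safe_cpre0 IH; rewrite ELS.
move: (consp n); rewrite /owned_by; case: (p n \in V0 A) => [-> // [u pu safeu]|].
  rewrite /safe_strategy -prefixS ELseq_prefix.
  have [_] := choose_edgeP (p n) (fun u => safe C u (EL w p n + w (p n) u)).
  by apply; exists u.
by move=> _; apply.
Qed.

Definition unsafe (v : V) (e : int) : Prop := forall C, ~ safe C v e.

Definition target (L : int) (v : V) (e : int) : Prop := e < 0 \/ L <= e /\ unsafe v e.

Definition attr_step (L : int) (X : V -> int -> Prop) (v : V) (e : int) : Prop :=
  target L v e \/
  0 <= e < L /\ (if v \in V0 A then forall u, edge A v u -> X u (e + w v u)
                 else exists2 u, edge A v u & X u (e + w v u)).

Definition attr (L : int) (k : nat) : V -> int -> Prop := iter k (attr_step L) (target L).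

Lemma attr_step_mono L (X Y : V -> int -> Prop) v e :
  (forall v e, X v e -> Y v e) -> attr_step L X v e -> attr_step L Y v e.
Proof.
move=> subXY [tgt|[rng step]]; [by left | right; split=> //].
case: (v \in V0 A) step => [allX u vu|[u vu Xu]]; first exact/subXY/allX.
by exists u; last exact: subXY.
Qed.

Lemma target_attr L k v e : target L v e -> attr L k v e.
Proof. by case: k => [|k] tgt //; left. Qed.

Lemma attrS L k v e : attr L k v e -> attr L k.+1 v e.
Proof.
elim: k v e => [|k IH] v e; first by left.
exact: attr_step_mono.
Qed.

Lemma attr_stationary L k : (forall v e, attr L k.+1 v e -> attr L k v e) ->
  forall j, (k <= j)%N -> forall v e, attr L j.+1 v e -> attr L j v e.
Proof.
move=> fixk; elim=> [|j IH]; first by rewrite leqn0 => /eqP <-.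
rewrite leq_eqVlt => /orP [/eqP <- //|/IH{}IH] v e.
exact: attr_step_mono.
Qed.

Definition attr_bound (L : int) : nat := (#|V| * `|L|)%N.

Lemma attr_stable L v e : attr L (attr_bound L).+1 v e -> attr L (attr_bound L) v e.
Proof.
pose B k := [set s : V * 'I_`|L| | asbool (attr L k s.1 (s.2 : nat)%:Z)].
have incB k : B k \subset B k.+1.
  by apply/subsetP => s; rewrite !inE => /asboolP/attrS/asboolP.
have [k le_k_card eqB] := chain_stabilizes incB.
apply: (attr_stationary (k := k)); last by rewrite card_prod card_ord in le_k_card.
move=> u f attr_uf; case: (attr_uf) => [/target_attr //|[/andP [f_ge0 f_ltL] _]].
have ltn_f : (`|f| < `|L|)%N by lia.
have : (u, Ordinal ltn_f) \in B k.+1 by rewrite inE /= gez0_abs //; apply/asboolP.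
by rewrite eqB inE /= gez0_abs // => /asboolP.
Qed.

Definition wmax : nat := \max_(q : V * V) `|w q.1 q.2|%N.

Lemma w_bounds u x : - wmax%:Z <= w u x <= wmax%:Z.
Proof.
have : (`|w u x| <= wmax)%N.
  exact: (leq_bigmax (F := fun q : V * V => `|w q.1 q.2|%N) (u, x)).
by rewrite -lez_nat -ler_norml.
Qed.

Section Attractor.
Variable L : int.
Local Notation attrL := (attr L (attr_bound L)).
Variable C : nat.
Hypothesis safe_above : forall q : V * 'I_wmax.+1,
  unsafe q.1 (L + (q.2 : nat)%:Z) \/ safe C q.1 (L + (q.2 : nat)%:Z).

Let Cs := maxn C `|L|.

Let escape (u : V) (f : int) : Prop := (0 <= f < L /\ ~ attrL u f) \/ safe Cs u f.

Let escape_of_not_attr x f : f <= L + wmax%:Z -> ~ attrL x f -> escape x f.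
Proof.
move=> le_f not_attr; have not_target : ~ target L x f by move/(target_attr (attr_bound L)).
have f_ge0 : 0 <= f by rewrite leNgt; apply/negP => f_lt0; apply: not_target; left.
have [f_ltL|L_lef] := ltP f L; first by left; rewrite f_ge0 f_ltL.
have ltn_fL : (`|f - L| < wmax.+1)%N by lia.
case: (safe_above (x, Ordinal ltn_fL)) => /=; rewrite gez0_abs ?subr_ge0 // [L + _]addrC subrK.
  by move=> unsafe_xf; case: not_target; right.
by move=> safe_xf; right; apply: safe_le safe_xf; apply: leq_maxl.
Qed.

Let escape_post u e : escape u e -> cpre0 Cs escape u e.
Proof.
case=> [[/andP [e_ge0 e_ltL] not_attr]|safe_ue]; last first.
  by apply: (cpre0_mono (X := safe Cs)) => [v f|]; [right|apply: safe_cpre0].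
have not_attrS : ~ attr L (attr_bound L).+1 u e by move/attr_stable.
have in_range_e : in_range Cs e.
  by rewrite /in_range e_ge0 /=; have := leq_maxr C `|L|; lia.
have succ_bound x : e + w u x <= L + wmax%:Z by have := w_bounds u x; lia.
split=> //; case u0: (u \in V0 A).
  apply: NNPP => no_escape; apply: not_attrS; right; rewrite e_ge0 e_ltL u0.
  split=> // x ux; apply: NNPP => not_attr_x; apply: no_escape.
  by exists x => //; apply: escape_of_not_attr.
move=> x ux; apply: escape_of_not_attr => // attr_x; apply: not_attrS.
by right; rewrite e_ge0 e_ltL u0; split=> //; exists x.
Qed.

Lemma safe_of_not_attr v e : 0 <= e < L -> ~ attrL v e -> safe Cs v e.
Proof. by move=> rng_e not_attr; exists escape; [exact: escape_post | left]. Qed.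

End Attractor.

Lemma unsafe_attr L v e : unsafe v e -> attr L (attr_bound L) v e.
Proof.
move=> unsafe_ve; apply: NNPP => not_attr.
have [C safe_above] : exists C, forall q : V * 'I_wmax.+1,
    unsafe q.1 (L + (q.2 : nat)%:Z) \/ safe C q.1 (L + (q.2 : nat)%:Z).
  apply: exists_uniform_bound => [q C C' leCC' [?|/(safe_le leCC')]|q]; [by left|by right|].
  case: (classic (unsafe q.1 (L + (q.2 : nat)%:Z))) => [?|]; first by exists 0%N; left.
  by move=> /not_all_ex_not [C /NNPP safe_q]; exists C; right.
have not_target : ~ target L v e by move/(target_attr (attr_bound L)).
have e_ge0 : 0 <= e by rewrite leNgt; apply/negP => ?; apply: not_target; left.
have e_ltL : e < L by rewrite ltNge; apply/negP => ?; apply: not_target; right.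
have rng_e : 0 <= e < L by rewrite e_ge0 e_ltL.
exact: unsafe_ve (safe_of_not_attr safe_above rng_e not_attr).
Qed.

Section CounterPlay.
Variable sg : seq V -> V -> V.
Variable t : nat.
Hypothesis sg_strategy : strategy false sg.
Hypothesis sg_wins : forall p, is_play p -> consistent false sg p -> AvgEnergyL w t p.
Hypothesis unsafe_init : unsafe (vinit A) 0.

Let W : nat := wmax.+1.

(* A target [2 W Q] reached within [|V| 2 W Q] steps after time [T] makes the
   energy sum exceed the average bound [t]; the summand [|e|] keeps the target
   above the current energy [e]. *)
Definition phase_size (T : nat) (e : int) : nat := (t.+1 * (1 + 2 * #|V| * W) + T + `|e| + 2)%N.
Definition next_target (T : nat) (e : int) : int := (2 * W * phase_size T e)%N%:Z.

Definition play_move (h : seq V) (L : int) (k : nat) : V :=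
  let v := last (vinit A) h in
  if v \in V0 A then sg (take (size h).-1 h) v
  else choose_edge v (fun u => attr L k u (ELseq h + w v u)).

(* A configuration is (history, goal L, budget k); Player 1 moves inside [attr L k],
   and once the goal is reached it is raised and the budget refilled. *)
Definition play_step (c : seq V * int * nat) : seq V * int * nat :=
  let: (h, L, k) := c in
  let v := last (vinit A) h in
  let reset := asbool (target L v (ELseq h)) in
  let L' := if reset then next_target (size h).-1 (ELseq h) else L in
  let k' := if reset then attr_bound L' else k in
  (rcons h (play_move h L' k'.-1), L', k'.-1).

Definition config (n : nat) := iter n play_step ([:: vinit A], 0, 0%N).
Definition history n := (config n).1.1.
Definition goal n := (config n).1.2.
Definition budget n := (config n).2.
Definition play n := last (vinit A) (history n).

Lemma historyS n : history n.+1 = rcons (history n) (play n.+1).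
Proof.
rewrite /play /history /config iterS; case: (iter n play_step _) => [[h L] k] /=.
by rewrite last_rcons.
Qed.

Lemma history_prefix n : history n = Defs.prefix play n.+1.
Proof. by elim: n => [//|n IH]; rewrite historyS IH -prefixS. Qed.

Lemma size_history n : size (history n) = n.+1.
Proof. by rewrite history_prefix size_prefix. Qed.

Lemma ELseq_history n : ELseq (history n) = EL w play n.
Proof. by rewrite history_prefix ELseq_prefix. Qed.

Lemma play_stepE n :
  let reset := asbool (target (goal n) (play n) (EL w play n)) in
  let L' := if reset then next_target n (EL w play n) else goal n in
  let k' := if reset then attr_bound L' else budget n in
  [/\ goal n.+1 = L', budget n.+1 = k'.-1 & play n.+1 = play_move (history n) L' k'.-1].
Proof.
rewrite /play /goal /budget /history /config iterS -/(config n).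
have := size_history n; have := ELseq_history n; rewrite /play /history.
by case: (config n) => [[h L] k] /= -> ->; rewrite last_rcons.
Qed.

Lemma play_move_edge h L k : edge A (last (vinit A) h) (play_move h L k).
Proof.
rewrite /play_move; case v0: (_ \in V0 A); first by apply: sg_strategy; rewrite /owned_by v0.
exact: (choose_edgeP _ _).1.
Qed.

Lemma play_move_attr h L k :
  let v := last (vinit A) h in
  attr L k.+1 v (ELseq h) -> ~ target L v (ELseq h) ->
  attr L k (play_move h L k) (ELseq h + w v (play_move h L k)).
Proof.
move=> v [//|[_ step]] _; rewrite /play_move -/v.
case v0: (v \in V0 A) in step *; first by apply/step/sg_strategy; rewrite /owned_by v0.
exact: (choose_edgeP v (fun u => attr L k u (ELseq h + w v u))).2 step.
Qed.

Lemma play_is_play : is_play play.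
Proof.
split=> // n; have [_ _ ->] := play_stepE n.
by rewrite /play; apply: play_move_edge.
Qed.

Lemma play_consistent : consistent false sg play.
Proof.
move=> n play0; have [_ _ ->] := play_stepE n.
rewrite /play_move -/(play n); move: play0; rewrite /owned_by => ->.
by rewrite size_history history_prefix prefixS -cats1 take_size_cat // size_prefix.
Qed.

Lemma play_EL_ge0 n : 0 <= EL w play n.
Proof. by case: (sg_wins play_is_play play_consistent). Qed.

Lemma next_target_gt T e : e < next_target T e.
Proof.
have : (phase_size T e <= 2 * W * phase_size T e)%N by rewrite leq_pmull.
by rewrite /next_target /phase_size; have := lez_abs e; lia.
Qed.

Lemma attr_bound_next_target_gt0 T e : (0 < attr_bound (next_target T e))%N.
Proof.
rewrite /attr_bound /next_target /phase_size !muln_gt0 addn2 andbT.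
by apply/card_gt0P; exists (vinit A).
Qed.

Lemma attr_invariant n : attr (goal n) (budget n) (play n) (EL w play n).
Proof.
elim: n => [|n IH]; first by rewrite /= EL0; right; split.
have step_attr L k : attr L k.+1 (play n) (EL w play n) -> ~ target L (play n) (EL w play n) ->
    attr L k (play_move (history n) L k) (EL w play n + w (play n) (play_move (history n) L k)).
  by rewrite -ELseq_history; apply: play_move_attr.
rewrite ELS; have [-> -> ->] := play_stepE n.
case: asboolP => [reach|not_reach]; last first.
  by move: IH; case: (budget n) => [//|k] IH; apply: step_attr.
have unsafe_n : unsafe (play n) (EL w play n).
  by case: reach => [|[]//]; rewrite ltNge play_EL_ge0.
set L' := next_target n (EL w play n).
have not_target : ~ target L' (play n) (EL w play n).
  case=> [|[]]; first by rewrite ltNge play_EL_ge0.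
  by rewrite leNgt next_target_gt.
move: (step_attr L' (attr_bound L').-1).
by rewrite prednK ?attr_bound_next_target_gt0 //; apply; first exact: unsafe_attr.
Qed.

Definition reached n := target (goal n) (play n) (EL w play n).

Lemma budget0_reached n : budget n = 0%N -> reached n.
Proof. by move=> budget0; have := attr_invariant n; rewrite budget0. Qed.

Lemma reached_step n (L' := next_target n (EL w play n)) :
  reached n -> goal n.+1 = L' /\ budget n.+1 = (attr_bound L').-1.
Proof. by move=> reach; have [-> -> _] := play_stepE n; case: asboolP. Qed.

Lemma unreached_step n : ~ reached n -> goal n.+1 = goal n /\ budget n.+1 = (budget n).-1.
Proof. by move=> not_reach; have [-> -> _] := play_stepE n; case: asboolP. Qed.

Lemma next_reached T (L' := next_target T (EL w play T)) : reached T ->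
  exists T', [/\ (T < T' <= T + attr_bound L')%N, reached T' & goal T' = L'].
Proof.
move=> reachT; set K := attr_bound L'.
have K_gt0 : (0 < K)%N by apply: attr_bound_next_target_gt0.
have search j : (j < K)%N ->
    (exists T', [/\ (T < T' <= T + j)%N, reached T' & goal T' = L']) \/
    goal (T + j).+1 = L' /\ budget (T + j).+1 = (K.-1 - j)%N.
  elim: j => [|j IH] lt_jK; first by right; rewrite addn0 subn0; apply: reached_step.
  case: (IH (ltnW lt_jK)) => [[T' [le_T' ? ?]]|[goalj budgetj]].
    by left; exists T'; split=> //; lia.
  rewrite addnS; case: (classic (reached (T + j).+1)) => [reach|not_reach].
    by left; exists (T + j).+1; split=> //; lia.
  by right; have [-> ->] := unreached_step not_reach; rewrite goalj budgetj subnS.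
case: (search K.-1 _); first by rewrite ltn_predL.
  by move=> [T' [le_T' ? ?]]; exists T'; split=> //; lia.
rewrite -addnS prednK // subnn => -[goalK /budget0_reached reachK].
by exists (T + K); split=> //; lia.
Qed.

Lemma reached_unbounded N : exists2 T, (N <= T)%N & reached T.
Proof.
elim: N => [|N [T le_NT reachT]]; first by exists 0%N => //; apply: budget0_reached.
have [T' [/andP [lt_TT' _] reachT' _]] := next_reached reachT.
by exists T' => //; apply: leq_ltn_trans lt_TT'.
Qed.

Lemma EL_succ_le n : EL w play n.+1 <= EL w play n + W%:Z.
Proof. by rewrite ELS lerD2l; have := w_bounds (play n) (play n.+1); lia. Qed.

Lemma phase_size_large T T' e : (T' <= T + attr_bound (next_target T e))%N ->
  (t.+1 * T'.+1 < phase_size T e * (phase_size T e).+1)%N.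
Proof.
rewrite /attr_bound /next_target /=.
have : (t.+1 * (1 + 2 * #|V| * W) + T + 1 <= phase_size T e)%N by rewrite /phase_size; lia.
move: (phase_size T e) #|V| W => Q v W'.
nia.
Qed.

Lemma counter_play_absurd : False.
Proof.
have [_ avg_le] := sg_wins play_is_play play_consistent.
have [N avgN] := avg_le 1 ltr01.
have [T le_NT reachT] := reached_unbounded N.
have [T' [/andP [lt_TT' le_T'] reachT' goalT']] := next_reached reachT.
have peak : next_target T (EL w play T) <= EL w play T'.
  by case: reachT' => [|[]]; [rewrite ltNge play_EL_ge0 | rewrite goalT'].
have sum_ge := sum_ge_of_peak (EL0 play) play_EL_ge0 EL_succ_le (ltn0Sn _) peak.
have sum_gt : (t.+1 * T'.+1)%N%:Z < \sum_(i < T'.+1) EL w play i.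
  by apply: lt_le_trans sum_ge; rewrite ltz_nat; apply: phase_size_large.
have := avgN T'.+1 (leq_trans le_NT (leqW (ltnW lt_TT'))).
rewrite /avgEL ler_pdivrMr ?ltr0n // natr1 -natrM.
by rewrite -(ltr_int rat) in sum_gt; move/(lt_le_trans sum_gt); rewrite ltxx.
Qed.

End CounterPlay.

End EnergyGames.

Theorem lemma2 (A : arena) (w : vert A -> vert A -> int) :
  (exists t : nat, wins0 (AvgEnergyL w t)) <->
  (exists cap : nat, wins0 (EnergyLU w cap)).
Proof.
split=> [[t [sg [sg_strategy sg_wins]]]|[cap [sg [sg_strategy sg_wins]]]].
  case: (classic (exists C, safe w C (vinit A) 0)) => [[C safe0]|no_safe].
    by exists C; apply: safe_wins0.
  by case: (counter_play_absurd sg_strategy sg_wins) => C safe0; apply: no_safe; exists C.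
by exists cap, sg; split=> // p playp consp; apply/EnergyLU_AvgEnergyL/sg_wins.
Qed.
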